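(* Let $V$ be a commutative unital quantale whose underlying lattice is a frame and in which $k=\top$. Let $(X,a)$, $(Y,b)$ be $V$-groups and $\varphi\colon Y\to\mathrm{Aut}(X)$ a group action such that $\varphi_y\colon(X,a)\to(X,a)$ is a $V$-functor for every $y\in Y$. Define $\mathrm{lex}\colon(X\times Y)\times(X\times Y)\to V$ by $\mathrm{lex}((x,y),(x',y'))=a(x,x')$ if $y=y'$ and $\mathrm{lex}((x,y),(x',y'))=b(y,y')$ if $y\neq y'$. The following are equivalent: (i) $(X,a)\xrightarrow{\langle 1,0\rangle}(X\rtimes_\varphi Y,\mathrm{lex})\underset{\langle 0,1\rangle}{\overset{\pi_2}{\rightleftarrows}}(Y,b)$ is a split extension in $\mathsf{VGrp}$; (ii) for all $x\in X$ and all $y\in Y\setminus\{0\}$, $b(y,0)\otimes b(0,y)\le a(x,0)$.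
   Context: A commutative unital quantale $V$ is a complete lattice with a commutative associative operation $\otimes$ with unit $k$ preserving arbitrary joins in each variable. A $V$-category $(X,a)$: $a\colon X\times X\to V$ with $k\le a(x,x)$ and $a(x,x')\otimes a(x',x'')\le a(x,x'')$; a $V$-functor is a map $f$ with $a(x,x')\le b(f(x),f(x'))$. A $V$-group $(X,a,+)$ is a $V$-category with a group structure (additive, not necessarily abelian) such that $a(x_1,x_2)\otimes a(x_1',x_2')\le a(x_1+x_1',x_2+x_2')$; $V$-homomorphisms are group homomorphisms that are $V$-functors; category $\mathsf{VGrp}$ (pointed since $k=\top$). The semidirect product $X\rtimes_\varphi Y$ is $X\times Y$ with $(x,y)+(x',y')=(x+\varphi_y(x'),y+y')$, $\varphi_y=\varphi(y)$; $\langle 1,0\rangle(x)=(x,0)$, $\langle 0,1\rangle(y)=(0,y)$, $\pi_2(x,y)=y$. A split extension in $\mathsf{VGrp}$ means: the structure on the middle object makes it a $V$-group, all three maps are $V$-homomorphisms, $\pi_2\circ\langle 0,1\rangle=1_Y$, and $\langle 1,0\rangle$ is a kernel of $\pi_2$ in $\mathsf{VGrp}$. *)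

From Stdlib Require Import ClassicalEpsilon.

Record quantale := Quantale {
  qcar :> Type;
  qle : qcar -> qcar -> Prop;
  qsup : (qcar -> Prop) -> qcar;
  qten : qcar -> qcar -> qcar;
  qk : qcar;
  qle_refl : forall x, qle x x;
  qle_trans : forall x y z, qle x y -> qle y z -> qle x z;
  qle_antisym : forall x y, qle x y -> qle y x -> x = y;
  qsup_ub : forall (S : qcar -> Prop) x, S x -> qle x (qsup S);
  qsup_least : forall (S : qcar -> Prop) u,
      (forall x, S x -> qle x u) -> qle (qsup S) u;
  qtenC : forall x y, qten x y = qten y x;
  qtenA : forall x y z, qten x (qten y z) = qten (qten x y) z;
  qten1 : forall x, qten qk x = x;
  qten_supr : forall x (S : qcar -> Prop),
      qten x (qsup S) = qsup (fun z => exists s, S s /\ z = qten x s);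
  qten_supl : forall x (S : qcar -> Prop),
      qten (qsup S) x = qsup (fun z => exists s, S s /\ z = qten s x)
}.

Arguments qle {q}.
Arguments qsup {q}.
Arguments qten {q}.
Arguments qk {q}.

Definition qtop (V : quantale) : V := qsup (fun _ => True).
Definition qmeet (V : quantale) (x y : V) : V :=
  qsup (fun z => qle z x /\ qle z y).

Definition is_frame (V : quantale) : Prop :=
  forall (x : V) (S : V -> Prop),
    qmeet V x (qsup S) = qsup (fun z => exists s, S s /\ z = qmeet V x s).

Definition is_group {X : Type} (add : X -> X -> X) (zero : X) (opp : X -> X) : Prop :=
  (forall x y z, add x (add y z) = add (add x y) z) /\
  (forall x, add zero x = x) /\ (forall x, add x zero = x) /\
  (forall x, add (opp x) x = zero) /\ (forall x, add x (opp x) = zero).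

Definition is_group_hom {X Y : Type} (addX : X -> X -> X) (addY : Y -> Y -> Y)
  (f : X -> Y) : Prop := forall x x', f (addX x x') = addY (f x) (f x').

Definition is_VCat (V : quantale) {X : Type} (a : X -> X -> V) : Prop :=
  (forall x, qle qk (a x x)) /\
  (forall x x' x'', qle (qten (a x x') (a x' x'')) (a x x'')).

Definition is_VFunctor (V : quantale) {X Y : Type} (a : X -> X -> V) (b : Y -> Y -> V)
  (f : X -> Y) : Prop := forall x x', qle (a x x') (b (f x) (f x')).

Definition is_VGroup (V : quantale) {X : Type} (add : X -> X -> X) (zero : X)
  (opp : X -> X) (a : X -> X -> V) : Prop :=
  is_VCat V a /\ is_group add zero opp /\
  (forall x1 x2 x1' x2', qle (qten (a x1 x2) (a x1' x2')) (a (add x1 x1') (add x2 x2'))).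

Definition is_VHom (V : quantale) {X Y : Type} (addX : X -> X -> X) (a : X -> X -> V)
  (addY : Y -> Y -> Y) (b : Y -> Y -> V) (f : X -> Y) : Prop :=
  is_group_hom addX addY f /\ is_VFunctor V a b f.

(** [f : X -> Y] is a kernel of [g : Y -> W] in VGrp (zero morphisms are the
    constant-zero maps, VGrp being pointed). *)
Definition is_kernel_VGrp (V : quantale)
  {X Y W : Type} (addX : X -> X -> X) (a : X -> X -> V)
  (addY : Y -> Y -> Y) (b : Y -> Y -> V) (zeroW : W)
  (f : X -> Y) (g : Y -> W) : Prop :=
  (forall x, g (f x) = zeroW) /\
  (forall (Z : Type) (addZ : Z -> Z -> Z) (zeroZ : Z) (oppZ : Z -> Z) (c : Z -> Z -> V),
     is_VGroup V addZ zeroZ oppZ c ->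
     forall h : Z -> Y, is_VHom V addZ c addY b h ->
     (forall z, g (h z) = zeroW) ->
     exists u : Z -> X, is_VHom V addZ c addX a u /\ (forall z, f (u z) = h z) /\
       (forall u' : Z -> X, is_VHom V addZ c addX a u' ->
          (forall z, f (u' z) = h z) -> forall z, u' z = u z)).

Definition sd_add {X Y : Type} (addX : X -> X -> X) (addY : Y -> Y -> Y)
  (phi : Y -> X -> X) (p q : X * Y) : X * Y :=
  (addX (fst p) (phi (snd p) (fst q)), addY (snd p) (snd q)).

Definition sd_zero {X Y : Type} (zeroX : X) (zeroY : Y) : X * Y := (zeroX, zeroY).

Definition sd_opp {X Y : Type} (oppX : X -> X) (oppY : Y -> Y)
  (phi : Y -> X -> X) (p : X * Y) : X * Y :=
  (phi (oppY (snd p)) (oppX (fst p)), oppY (snd p)).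

Definition lex (V : quantale) {X Y : Type} (a : X -> X -> V) (b : Y -> Y -> V)
  (p q : X * Y) : V :=
  if excluded_middle_informative (snd p = snd q) then a (fst p) (fst q)
  else b (snd p) (snd q).

Definition inj1 {X Y : Type} (zeroY : Y) (x : X) : X * Y := (x, zeroY).
Definition inj2 {X Y : Type} (zeroX : X) (y : Y) : X * Y := (zeroX, y).
Definition pi2 {X Y : Type} (p : X * Y) : Y := snd p.

Definition is_split_ext_sd (V : quantale) {X Y : Type}
  (addX : X -> X -> X) (zeroX : X) (oppX : X -> X) (a : X -> X -> V)
  (addY : Y -> Y -> Y) (zeroY : Y) (oppY : Y -> Y) (b : Y -> Y -> V)
  (phi : Y -> X -> X) : Prop :=
  is_VGroup V (sd_add addX addY phi) (sd_zero zeroX zeroY) (sd_opp oppX oppY phi)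
    (lex V a b) /\
  is_VHom V addX a (sd_add addX addY phi) (lex V a b) (inj1 zeroY) /\
  is_VHom V (sd_add addX addY phi) (lex V a b) addY b pi2 /\
  is_VHom V addY b (sd_add addX addY phi) (lex V a b) (inj2 zeroX) /\
  (forall y : Y, pi2 (inj2 (X:=X) zeroX y) = y) /\
  is_kernel_VGrp V addX a (sd_add addX addY phi) (lex V a b) zeroY (inj1 zeroY) pi2.

(** When [y <> y'], [lex] compares [(x,y)] and [(x',y')] through [b] alone, so
    the one transitivity instance of [lex] not inherited from [a] or [b] is the
    round trip [(x,y) -> (x'',y') -> (x',y)], which needs
    [b y y' ⊗ b y' y <= a x x'].  Translating by [-y'] in [Y] and by [-x'] in [X]
    reduces this to condition (ii).  The same round-trip bound also settles the
    only nontrivial case of the compatibility of [lex] with the semidirect sum;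
    everything else holds outright because [k = ⊤] puts [u ⊗ v] below [u] and
    [v]. *)

From Stdlib Require Import ClassicalEpsilon.

Section Quantale.
Variable V : quantale.

Lemma qten_monor (z x y : V) : qle x y -> qle (qten z x) (qten z y).
Proof.
  intros Hxy.
  assert (Ey : y = qsup (fun s => s = x \/ s = y)).
  { apply qle_antisym.
    - apply qsup_ub. now right.
    - apply qsup_least. intros s [-> | ->]; auto using qle_refl. }
  rewrite Ey, qten_supr. apply qsup_ub. exists x. auto.
Qed.

Lemma qten_monol (z x y : V) : qle x y -> qle (qten x z) (qten y z).
Proof. intros Hxy. rewrite (qtenC _ x), (qtenC _ y). now apply qten_monor. Qed.

Lemma qten_mono (x x' y y' : V) :
  qle x x' -> qle y y' -> qle (qten x y) (qten x' y').
Proof.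
  intros Hx Hy. apply qle_trans with (qten x' y).
  - now apply qten_monol.
  - now apply qten_monor.
Qed.

Hypothesis Hk : qk = qtop V.

Lemma qle_k (x : V) : qle x qk.
Proof. rewrite Hk. now apply qsup_ub. Qed.

Lemma qten_ler (x y : V) : qle (qten x y) y.
Proof.
  apply qle_trans with (qten qk y).
  - apply qten_monol, qle_k.
  - rewrite qten1. apply qle_refl.
Qed.

Lemma qten_lel (x y : V) : qle (qten x y) x.
Proof. rewrite qtenC. apply qten_ler. Qed.

End Quantale.

Section Group.
Context {G : Type} {add : G -> G -> G} {zero : G} {opp : G -> G}.
Hypothesis HG : is_group add zero opp.

Lemma grp_addA u v w : add u (add v w) = add (add u v) w.
Proof. apply HG. Qed.

Lemma grp_add0g u : add zero u = u.
Proof. apply HG. Qed.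

Lemma grp_addg0 u : add u zero = u.
Proof. apply HG. Qed.

Lemma grp_addNg u : add (opp u) u = zero.
Proof. apply HG. Qed.

Lemma grp_addgN u : add u (opp u) = zero.
Proof. apply HG. Qed.

Lemma grp_addgK u w : add (add u w) (opp w) = u.
Proof. now rewrite <- grp_addA, grp_addgN, grp_addg0. Qed.

Lemma grp_addgNK u w : add (add u (opp w)) w = u.
Proof. now rewrite <- grp_addA, grp_addNg, grp_addg0. Qed.

Lemma grp_subg0_eq u w : add u (opp w) = zero -> u = w.
Proof. intros E. now rewrite <- (grp_addgNK u w), E, grp_add0g. Qed.

Lemma grp_addgI w u v : add w u = add w v -> u = v.
Proof.
  intros E. now rewrite <- (grp_add0g u), <- (grp_add0g v), <- (grp_addNg w),
    <- !grp_addA, E.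
Qed.

Lemma grp_addIg w u v : add u w = add v w -> u = v.
Proof. intros E. now rewrite <- (grp_addgK u w), <- (grp_addgK v w), E. Qed.

End Group.

Section VGroup.
Context {V : quantale} {G : Type} {add : G -> G -> G} {zero : G} {opp : G -> G}.
Context {b : G -> G -> V}.
Hypothesis HG : is_VGroup V add zero opp b.

Lemma vgrp_le_addr u v w : qle (b u v) (b (add u w) (add v w)).
Proof.
  destruct HG as [[Hrefl _] [_ Hadd]].
  apply qle_trans with (qten (b u v) (b w w)); [|apply Hadd].
  rewrite <- (qten1 _ (b u v)) at 1. rewrite qtenC. now apply qten_monor.
Qed.

Lemma vgrp_le_addl u v w : qle (b u v) (b (add w u) (add w v)).
Proof.
  destruct HG as [[Hrefl _] [_ Hadd]].
  apply qle_trans with (qten (b w w) (b u v)); [|apply Hadd].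
  rewrite <- (qten1 _ (b u v)) at 1. now apply qten_monol.
Qed.

Lemma vgrp_sub_le u v : qle (b (add u (opp v)) zero) (b u v).
Proof.
  destruct HG as [_ [Hgrp _]].
  eapply qle_trans; [apply vgrp_le_addr with (w := v)|].
  rewrite (grp_addgNK Hgrp), (grp_add0g Hgrp). apply qle_refl.
Qed.

End VGroup.

Section Lex.
Context {V : quantale} {X Y : Type} {a : X -> X -> V} {b : Y -> Y -> V}.

Lemma lex_eq p q : snd p = snd q -> lex V a b p q = a (fst p) (fst q).
Proof. intros E. unfold lex. destruct excluded_middle_informative; tauto. Qed.

Lemma lex_neq p q : snd p <> snd q -> lex V a b p q = b (snd p) (snd q).
Proof. intros E. unfold lex. destruct excluded_middle_informative; tauto. Qed.

Definition roundtrip_le : Prop :=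
  forall y y' x x', y <> y' -> qle (qten (b y y') (b y' y)) (a x x').

Lemma lex_VCat_roundtrip_le : is_VCat V (lex V a b) -> roundtrip_le.
Proof.
  intros [_ Htrans] y y' x x' Hne.
  specialize (Htrans (x, y) (x, y') (x', y)).
  rewrite !lex_neq, lex_eq in Htrans by (simpl; auto).
  exact Htrans.
Qed.

Lemma inj1_VFunctor zeroY : is_VFunctor V a (lex V a b) (inj1 zeroY).
Proof. intros x x'. rewrite lex_eq by reflexivity. apply qle_refl. Qed.

Hypothesis Hk : qk = qtop V.

Lemma roundtrip_le_lex_VCat :
  is_VCat V a -> is_VCat V b -> roundtrip_le -> is_VCat V (lex V a b).
Proof.
  intros [HXrefl HXtrans] [_ HYtrans] Hround. split.
  - intros p. rewrite lex_eq by reflexivity. apply HXrefl.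
  - intros [x y] [x' y'] [x'' y''].
    destruct (excluded_middle_informative (y = y')) as [<-|n1];
    destruct (excluded_middle_informative (y = y'')) as [<-|n2].
    + rewrite !lex_eq by reflexivity. apply HXtrans.
    + rewrite lex_eq, !lex_neq by (simpl; auto). now apply qten_ler.
    + rewrite (lex_neq (x, y)), (lex_eq (x, y)), lex_neq by (simpl; auto).
      now apply Hround.
    + rewrite (lex_neq (x, y) (x', y')), (lex_neq (x, y)) by (simpl; auto).
      destruct (excluded_middle_informative (y' = y'')) as [<-|n3].
      * rewrite lex_eq by reflexivity. now apply qten_lel.
      * rewrite lex_neq by (simpl; auto). apply HYtrans.
Qed.

Lemma pi2_VFunctor : is_VCat V b -> is_VFunctor V (lex V a b) b pi2.
Proof.
  intros [Hrefl _] [x y] [x' y']. unfold pi2; simpl.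
  destruct (excluded_middle_informative (y = y')) as [<-|n].
  - rewrite lex_eq by reflexivity. eapply qle_trans; [now apply qle_k|apply Hrefl].
  - rewrite lex_neq by (simpl; auto). apply qle_refl.
Qed.

Lemma inj2_VFunctor zeroX : is_VCat V a -> is_VFunctor V b (lex V a b) (inj2 zeroX).
Proof.
  intros [Hrefl _] y y'. unfold inj2.
  destruct (excluded_middle_informative (y = y')) as [<-|n].
  - rewrite lex_eq by reflexivity. eapply qle_trans; [now apply qle_k|apply Hrefl].
  - rewrite lex_neq by (simpl; auto). apply qle_refl.
Qed.

End Lex.

Arguments roundtrip_le V {X Y} a b.

Section Roundtrip.
Context {V : quantale} {X Y : Type}.
Context {addX : X -> X -> X} {zeroX : X} {oppX : X -> X} {a : X -> X -> V}.
Context {addY : Y -> Y -> Y} {zeroY : Y} {oppY : Y -> Y} {b : Y -> Y -> V}.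
Hypothesis HX : is_VGroup V addX zeroX oppX a.
Hypothesis HY : is_VGroup V addY zeroY oppY b.

Lemma roundtrip_le_of_zero :
  (forall x y, y <> zeroY -> qle (qten (b y zeroY) (b zeroY y)) (a x zeroX)) ->
  roundtrip_le V a b.
Proof.
  intros H0 y y' x x' Hne.
  destruct HY as [_ [HYg _]].
  eapply qle_trans; [|apply (vgrp_sub_le HX)].
  eapply qle_trans; [|apply (H0 _ (addY y (oppY y')))].
  - rewrite <- (grp_addgN HYg y').
    apply qten_mono; apply (vgrp_le_addr HY).
  - intros E. apply Hne. exact (grp_subg0_eq HYg _ _ E).
Qed.

(* Translating [b y1' y2'] by [y1] on the left and [-y2'] on the right turns it
   into [b y2 y1]. *)
Lemma roundtrip_le_sum y1 y2 y1' y2' x x' :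
  roundtrip_le V a b -> y1 <> y2 -> addY y1 y1' = addY y2 y2' ->
  qle (qten (b y1 y2) (b y1' y2')) (a x x').
Proof.
  intros Hround Hne E. destruct HY as [_ [HYg _]].
  apply qle_trans with (qten (b y1 y2) (b y2 y1)); [|now apply Hround].
  apply qten_monor.
  eapply qle_trans; [apply (vgrp_le_addl HY) with (w := y1)|].
  rewrite E.
  eapply qle_trans; [apply (vgrp_le_addr HY) with (w := oppY y2')|].
  rewrite !(grp_addgK HYg). apply qle_refl.
Qed.

End Roundtrip.

Section Semidirect.
Context {X Y : Type}.
Context {addX : X -> X -> X} {zeroX : X} {oppX : X -> X}.
Context {addY : Y -> Y -> Y} {zeroY : Y} {oppY : Y -> Y}.
Hypothesis HXg : is_group addX zeroX oppX.
Hypothesis HYg : is_group addY zeroY oppY.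
Context {phi : Y -> X -> X}.
Hypothesis phi_hom : forall y, is_group_hom addX addX (phi y).
Hypothesis phi_act : forall y y' x, phi (addY y y') x = phi y (phi y' x).
Hypothesis phi0_surj : forall x', exists x, phi zeroY x = x'.

Lemma action0 x : phi zeroY x = x.
Proof.
  destruct (phi0_surj x) as [w <-].
  now rewrite <- phi_act, (grp_add0g HYg).
Qed.

Lemma action_zero y : phi y zeroX = zeroX.
Proof.
  apply (grp_addgI HXg (phi y zeroX)).
  now rewrite <- phi_hom, !(grp_addg0 HXg).
Qed.

Lemma sd_group :
  is_group (sd_add addX addY phi) (sd_zero zeroX zeroY) (sd_opp oppX oppY phi).
Proof.
  unfold sd_add, sd_zero, sd_opp.
  repeat split; intros [x1 y1]; simpl.
  - intros [x2 y2] [x3 y3]; simpl.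
    now rewrite phi_hom, phi_act, (grp_addA HXg), (grp_addA HYg).
  - now rewrite action0, (grp_add0g HXg), (grp_add0g HYg).
  - now rewrite action_zero, (grp_addg0 HXg), (grp_addg0 HYg).
  - now rewrite <- phi_hom, (grp_addNg HXg), action_zero, (grp_addNg HYg).
  - now rewrite <- phi_act, (grp_addgN HYg), action0, (grp_addgN HXg).
Qed.

Lemma inj1_hom : is_group_hom addX (sd_add addX addY phi) (inj1 zeroY).
Proof.
  intros x x'. unfold inj1, sd_add; simpl.
  now rewrite action0, (grp_add0g HYg).
Qed.

Lemma inj2_hom : is_group_hom addY (sd_add addX addY phi) (inj2 zeroX).
Proof.
  intros y y'. unfold inj2, sd_add; simpl.
  now rewrite action_zero, (grp_add0g HXg).
Qed.

Lemma pi2_hom : is_group_hom (sd_add addX addY phi) addY pi2.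
Proof. now intros p q. Qed.

Lemma inj1_kernel_pi2 (V : quantale) (a : X -> X -> V) (b : Y -> Y -> V) :
  is_kernel_VGrp V addX a (sd_add addX addY phi) (lex V a b) zeroY (inj1 zeroY) pi2.
Proof.
  split; [reflexivity|].
  intros Z addZ zeroZ oppZ c _ h [Hhom Hfun] Hker. unfold pi2 in Hker.
  exists (fun z => fst (h z)). repeat split.
  - intros z z'. rewrite Hhom. unfold sd_add; simpl. now rewrite Hker, action0.
  - intros z z'. specialize (Hfun z z').
    now rewrite lex_eq in Hfun by now rewrite !Hker.
  - intros z. unfold inj1. rewrite <- (Hker z). now destruct (h z).
  - intros u' _ Hu' z. now rewrite <- (Hu' z).
Qed.

End Semidirect.

Section SemidirectLex.
Context {V : quantale} {X Y : Type}.
Context {addX : X -> X -> X} {zeroX : X} {oppX : X -> X} {a : X -> X -> V}.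
Context {addY : Y -> Y -> Y} {zeroY : Y} {oppY : Y -> Y} {b : Y -> Y -> V}.
Hypothesis Hk : qk = qtop V.
Hypothesis HX : is_VGroup V addX zeroX oppX a.
Hypothesis HY : is_VGroup V addY zeroY oppY b.
Context {phi : Y -> X -> X}.
Hypothesis phi_V : forall y, is_VFunctor V a a (phi y).
Hypothesis Hround : roundtrip_le V a b.

Lemma lex_sd_add_le p1 p2 q1 q2 :
  qle (qten (lex V a b p1 p2) (lex V a b q1 q2))
      (lex V a b (sd_add addX addY phi p1 q1) (sd_add addX addY phi p2 q2)).
Proof.
  destruct HX as [_ [_ HXadd]]. destruct HY as [_ [HYg HYadd]].
  destruct p1 as [x1 y1], p2 as [x2 y2], q1 as [x1' y1'], q2 as [x2' y2'].
  unfold sd_add; simpl.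
  destruct (excluded_middle_informative (y1 = y2)) as [<-|n1];
  destruct (excluded_middle_informative (y1' = y2')) as [<-|n2].
  - rewrite !lex_eq by reflexivity. simpl.
    eapply qle_trans; [apply qten_monor, (phi_V y1)|apply HXadd].
  - assert (addY y1 y1' <> addY y1 y2')
      by (intros E; exact (n2 (grp_addgI HYg _ _ _ E))).
    rewrite lex_eq, !lex_neq by (simpl; auto). simpl.
    eapply qle_trans; [now apply qten_ler|apply (vgrp_le_addl HY)].
  - assert (addY y1 y1' <> addY y2 y1')
      by (intros E; exact (n1 (grp_addIg HYg _ _ _ E))).
    rewrite (lex_eq (x1', y1')), !lex_neq by (simpl; auto). simpl.
    eapply qle_trans; [now apply qten_lel|apply (vgrp_le_addr HY)].
  - rewrite (lex_neq (x1, y1)), (lex_neq (x1', y1')) by (simpl; auto).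
    destruct (excluded_middle_informative (addY y1 y1' = addY y2 y2')) as [E|n3].
    + rewrite lex_eq by (simpl; auto). simpl.
      now apply (roundtrip_le_sum HY).
    + rewrite lex_neq by (simpl; auto). apply HYadd.
Qed.

End SemidirectLex.

Theorem theorem7p4 (V : quantale) (HV : is_frame V) (Hk : qk = qtop V)
  (X : Type) (addX : X -> X -> X) (zeroX : X) (oppX : X -> X) (a : X -> X -> V)
  (HX : is_VGroup V addX zeroX oppX a)
  (Y : Type) (addY : Y -> Y -> Y) (zeroY : Y) (oppY : Y -> Y) (b : Y -> Y -> V)
  (HY : is_VGroup V addY zeroY oppY b)
  (phi : Y -> X -> X)
  (Hphi_aut : forall y, is_group_hom addX addX (phi y) /\
                        (forall x', exists! x, phi y x = x'))
  (Hphi_act : forall y y' x, phi (addY y y') x = phi y (phi y' x))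
  (Hphi_V : forall y, is_VFunctor V a a (phi y)) :
  is_split_ext_sd V addX zeroX oppX a addY zeroY oppY b phi <->
  (forall (x : X) (y : Y), y <> zeroY ->
     qle (qten (b y zeroY) (b zeroY y)) (a x zeroX)).
Proof.
  split.
  - intros [[Hcat _] _] x y Hy.
    now apply lex_VCat_roundtrip_le.
  - intros H0.
    pose proof (roundtrip_le_of_zero HX HY H0) as Hround.
    pose proof HX as [HXcat [HXg _]]. pose proof HY as [HYcat [HYg _]].
    assert (Hhom : forall y, is_group_hom addX addX (phi y)) by apply Hphi_aut.
    assert (Hsurj : forall x', exists x, phi zeroY x = x').
    { intros x'. destruct (Hphi_aut zeroY) as [_ Hu].
      destruct (Hu x') as [x [Hx _]]. now exists x. }
    split; [split; [|split]|split; [split|split; [split|split; [split|split]]]].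
    + now apply roundtrip_le_lex_VCat.
    + exact (sd_group HXg HYg Hhom Hphi_act Hsurj).
    + exact (lex_sd_add_le Hk HX HY Hphi_V Hround).
    + exact (inj1_hom HYg Hphi_act Hsurj).
    + apply inj1_VFunctor.
    + apply pi2_hom.
    + now apply pi2_VFunctor.
    + exact (inj2_hom HXg Hhom).
    + now apply inj2_VFunctor.
    + reflexivity.
    + exact (inj1_kernel_pi2 HYg Hphi_act Hsurj V a b).
Qed.
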